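(* Let $d,\ell\ge1$, let $a\in\mathbb{R}^d$, and let $\mathbf{A}=\mathbf{S}+ae_d^T\in\mathbb{R}^{d\times d}$ be the companion matrix with last column $a$. Let $\mathbf{B}\in\mathbb{R}^{d}$ (a column), $\mathbf{C}\in\mathbb{R}^{1\times d}$, and $\tilde{\mathbf{C}}=\mathbf{C}(\mathbf{I}-\mathbf{A}^\ell)\in\mathbb{R}^{d}$. Let $\omega=\exp(-2\pi i/\ell)$ and assume $\mathbf{I}-\omega^m\mathbf{A}$ is invertible for every $m=0,\dots,\ell-1$. Consider the following algorithm (Algorithm 1). 1. For $u,v\in\mathbb{R}^d$ define $\mathrm{quad}(u,v)\in\mathbb{C}^\ell$ by: form $q\in\mathbb{R}^d$ with $q_k=\sum_{j=1}^{d-k}u_{j+k}v_j$ for $k=0,\dots,d-1$; zero-pad $q$ to length $\ell\lceil d/\ell\rceil$; split it into $\lceil d/\ell\rceil$ consecutive chunks $q^{(1)},\dots,q^{(\lceil d/\ell\rceil)}$ of length $\ell$; return the length-$\ell$ discrete Fourier transform $\mathcal{F}_\ell(q^{(1)}+\dots+q^{(\lceil d/\ell\rceil)})$, where $\mathcal{F}_\ell(w)[m]=\sum_{k=0}^{\ell-1}w_k\omega^{mk}$. 2. Compute $z=(\bar\omega^0,\bar\omega^1,\dots,\bar\omega^{\ell-1})$. 3. Compute, entrywise for $m=0,\dots,\ell-1$, $$\tilde{\mathbf{F}}^y=\mathrm{quad}(\tilde{\mathbf{C}},\mathbf{B})+\frac{\mathrm{quad}(\tilde{\mathbf{C}},a)\cdot\mathrm{quad}(e_d,\mathbf{B})}{z-\mathrm{quad}(e_d,a)}\in\mathbb{C}^\ell.$$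 4. Return $\mathbf{F}^y=\mathcal{F}_\ell^{-1}(\tilde{\mathbf{F}}^y)$. Then Algorithm 1 returns the output filter $\mathbf{F}^y=(\mathbf{C}\mathbf{B},\mathbf{C}\mathbf{A}\mathbf{B},\mathbf{C}\mathbf{A}^2\mathbf{B},\dots,\mathbf{C}\mathbf{A}^{\ell-1}\mathbf{B})$.
   Context: $\mathbf{S}$ denotes the $d\times d$ down-shift matrix (ones on the first subdiagonal, zeros elsewhere), $e_d=(0,\dots,0,1)^T$ is the $d$-th standard basis vector, and $\mathbf{I}$ is the identity. $\mathcal{F}_\ell^{-1}$ is the inverse of the length-$\ell$ DFT $\mathcal{F}_\ell$. The division and product in step 3 are entrywise. *)

From HB Require Import structures.
From mathcomp Require Import all_boot all_order all_algebra.
From mathcomp Require Import all_classical all_reals all_analysis.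
From mathcomp Require Import complex.
Unset Printing Implicit Defensive.
Import Order.TTheory GRing.Theory Num.Theory.
Local Open Scope ring_scope.

Section Defs.
Variable R : realType.
Local Notation C := R[i].

Definition rc (x : R) : C := Complex x 0.

(* omega = exp(-2 pi i / l) = cos(2 pi / l) - i sin(2 pi / l) *)
Definition omega (l : nat) : C :=
  Complex (cos (2 * pi / l%:R)) (- sin (2 * pi / l%:R)).

Definition shiftS (d : nat) : 'M[R]_d := \matrix_(i, j) ((i == j.+1 :> nat)%:R).

Definition e_last (d : nat) : 'cV[R]_d := \col_(i < d) ((i == d.-1 :> nat)%:R).

Definition companion (d : nat) (a : 'cV[R]_d) : 'M[R]_d :=
  shiftS d + a *m (e_last d)^T.

(* q_k = sum_{j=1}^{d-k} u_{j+k} v_j (1-indexed); 0-indexed: pairs (i, j) of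
   indices in {0..d-1} with i = j + k *)
Definition quad_q (d : nat) (u v : 'cV[R]_d) (k : nat) : R :=
  \sum_(j < d) \sum_(i < d | (nat_of_ord i == (j + k)%N)) u i 0 * v j 0.

(* ceil(d / l) *)
Definition nchunks (d l : nat) : nat := ((d + l).-1 %/ l)%N.

Definition quad_qpad (d : nat) (u v : 'cV[R]_d) (n : nat) : R :=
  if (n < d)%N then quad_q d u v n else 0.

Definition quad_w (d l : nat) (u v : 'cV[R]_d) (r : 'I_l) : R :=
  \sum_(c < nchunks d l) quad_qpad d u v (c * l + r)%N.

Definition dft (l : nat) (w : 'I_l -> C) (m : 'I_l) : C :=
  \sum_(k < l) w k * omega l ^+ (m * k)%N.

Definition idft (l : nat) (x : 'I_l -> C) (k : 'I_l) : C :=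
  (l%:R)^-1 * \sum_(m < l) x m * (omega l ^+ (m * k)%N)^-1.

Definition quad (d l : nat) (u v : 'cV[R]_d) : 'I_l -> C :=
  dft l (fun r => rc (quad_w d l u v r)).

Definition algorithm1 (d l : nat) (a B : 'cV[R]_d) (Cm : 'rV[R]_d) : 'I_l -> C :=
  let A := companion d a in
  let Ct : 'cV[R]_d := (Cm *m (1%:M - A ^+ l))^T in
  let z : 'I_l -> C := fun m => conjc (omega l) ^+ m in
  let Fty : 'I_l -> C := fun m =>
    quad d l Ct B m + quad d l Ct a m * quad d l (e_last d) B m
                    / (z m - quad d l (e_last d) a m) in
  idft l Fty.

End Defs.

From HB Require Import structures.
From mathcomp Require Import all_boot all_order all_algebra.
From mathcomp Require Import all_classical all_reals all_analysis.
From mathcomp Require Import complex.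
From mathcomp Require Import ring lra zify.
Import Order.TTheory GRing.Theory Num.Theory.
Local Open Scope ring_scope.

(* For x = omega^m, quad(u, v)[m] is the bilinear form u^T (I - x S)^-1 v: folding the chunks
   changes nothing because x^l = 1, and (I - x S)^-1 is the lower triangular Toeplitz matrix of
   the powers of x.  As A = S + a e_d^T is a rank-one perturbation of S, the Sherman-Morrison
   formula identifies step 3 with C~ (I - x A)^-1 B, and since x^l = 1 the factor I - A^l in C~
   truncates the Neumann series: C (I - A^l) (I - x A)^-1 B = sum_(i < l) x^i C A^i B, which is
   the DFT of the output filter. *)

Lemma sum_unity_root_expr_eq0 (F : idomainType) (y : F) n :
  y ^+ n = 1 -> y != 1 -> \sum_(i < n) y ^+ i = 0.
Proof.
move=> yn1 y_neq1; apply/eqP; move: (subrX1 y n).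
by rewrite yn1 subrr => /esym/eqP; rewrite mulf_eq0 subr_eq0 (negPf y_neq1).
Qed.

Section DiscreteFourier.
Context {F : fieldType} {l : nat} {z : F}.
Hypothesis z_prim : l.-primitive_root z.

Lemma prim_root_orthogonal (j k : 'I_l) :
  \sum_(m < l) z ^+ (m * j) / z ^+ (m * k) = if j == k then l%:R else 0.
Proof.
have z_neq0 : z != 0 by rewrite (prim_root_eq0 z_prim) -lt0n (prim_order_gt0 z_prim).
have [->|j_neq_k] := eqVneq j k.
  under eq_bigr => m _ do rewrite divff ?expf_neq0 //.
  by rewrite sumr_const card_ord.
under eq_bigr => m _ do rewrite ![(m * _)%N]mulnC !exprM -expr_div_n.
apply: sum_unity_root_expr_eq0.
  rewrite expr_div_n -!exprM !(mulnC _ l) !exprM (prim_expr_order z_prim).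
  by rewrite !expr1n divr1.
apply: contra j_neq_k => /eqP/divr1_eq/eqP.
by rewrite (eq_prim_root_expr z_prim) !modn_small.
Qed.

Lemma prim_root_dft_inversion (h : 'I_l -> F) (k : 'I_l) :
  l%:R^-1 * \sum_(m < l) (\sum_(j < l) h j * z ^+ (m * j)) * (z ^+ (m * k))^-1 = h k.
Proof.
under eq_bigr => m _ do rewrite mulr_suml.
rewrite exchange_big /=.
under eq_bigr => j _ do under eq_bigr => m _ do rewrite -mulrA.
under eq_bigr => j _ do rewrite -mulr_sumr prim_root_orthogonal.
rewrite (bigD1 k) //= eqxx big1 ?addr0 => [|j /negPf -> //]; last by rewrite mulr0.
by rewrite mulrC mulfK ?(prim_root_natf_neq0 z_prim).
Qed.

End DiscreteFourier.

Lemma expr_cosNsin (R : realType) (t : R) (n : nat) :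
  Complex (cos t) (- sin t) ^+ n = Complex (cos (n%:R * t)) (- sin (n%:R * t)) :> R[i].
Proof.
elim: n => [|n IH]; first by rewrite expr0 !mul0r cos0 sin0 oppr0.
rewrite exprSr IH -(natr1 n) mulrDl mul1r cosD sinD.
by apply/eqP; rewrite eq_complex /=; apply/andP; split; apply/eqP; ring.
Qed.

Section Omega.
Context {R : realType} {l : nat}.
Hypothesis l_gt0 : (0 < l)%N.

Let theta : R := 2 * pi / l%:R.

Lemma omega_exprE n :
  omega R l ^+ n = Complex (cos (n%:R * theta)) (- sin (n%:R * theta)).
Proof. exact: expr_cosNsin. Qed.

Lemma omega_expr_order : omega R l ^+ l = 1.
Proof.
by rewrite omega_exprE /theta mulrC divfK ?pnatr_eq0 -?lt0n // mulr_natl cos2pi sin2pi oppr0.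
Qed.

Lemma omega_expr_unity (m : nat) : (omega R l ^+ m) ^+ l = 1.
Proof. by rewrite -exprM mulnC exprM omega_expr_order expr1n. Qed.

(* [cos (2 y) = 1] forces [sin y = 0], impossible for [0 < y < pi]. *)
Lemma omega_expr_neq1 j : (0 < j < l)%N -> omega R l ^+ j != 1.
Proof.
move=> /andP[j_gt0 j_lt_l]; rewrite omega_exprE.
pose y : R := pi * (j%:R / l%:R).
have -> : j%:R * theta = y + y by rewrite /y /theta; field; rewrite pnatr_eq0 -lt0n.
have y_gt0 : 0 < y by rewrite /y mulr_gt0 ?pi_gt0 ?divr_gt0 ?ltr0n.
have y_lt_pi : y < pi.
  by rewrite /y -[X in _ < X]mulr1 ltr_pM2l ?pi_gt0 // ltr_pdivrMr ?ltr0n // mul1r ltr_nat.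
have sin_y_gt0 : 0 < sin y by apply: sin_gt0_pi; rewrite y_gt0 y_lt_pi.
have := cos2Dsin2 y; rewrite cosD => pythagoras; apply/negP => /eqP [cos2y _]; nra.
Qed.

Lemma omega_prim : l.-primitive_root (omega R l).
Proof.
apply/andP; split => //; apply/forallP => i; rewrite unity_rootE.
have [->|i1_neq_l] := eqVneq i.+1 l; first by rewrite omega_expr_order eqxx.
by rewrite eqbF_neg omega_expr_neq1 //= ltn_neqAle i1_neq_l ltn_ord.
Qed.

Lemma conj_omega : conjc (omega R l) = (omega R l)^-1.
Proof.
have omega_conj1 : omega R l * conjc (omega R l) = 1.
  apply/eqP; rewrite eq_complex /= -/theta -(cos2Dsin2 theta).
  by apply/andP; split; apply/eqP; ring.
have omega_neq0 : omega R l != 0 by rewrite (prim_root_eq0 omega_prim) -lt0n.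
by rewrite -[LHS](mulKf omega_neq0) omega_conj1 mulr1.
Qed.

Lemma idft_dft (h : 'I_l -> R[i]) (k : 'I_l) : idft R l (dft R l h) k = h k.
Proof. by rewrite /idft /dft (prim_root_dft_inversion omega_prim). Qed.

End Omega.

Lemma eq_idft (R : realType) (l : nat) (f g : 'I_l -> R[i]) :
  f =1 g -> idft R l f =1 idft R l g.
Proof. by move=> fg k; rewrite /idft; under eq_bigr => m _ do rewrite fg. Qed.

Lemma sum_chunks_expr {F : pzRingType} (x : F) (f : nat -> F) (l N : nat) :
  x ^+ l = 1 ->
  \sum_(n < N * l) f n * x ^+ n = \sum_(r < l) (\sum_(c < N) f (c * l + r)%N) * x ^+ r.
Proof.
move=> xl1; under [RHS]eq_bigr => r _ do rewrite mulr_suml.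
rewrite exchange_big /=; elim: N => [|N IH]; first by rewrite mul0n !big_ord0.
rewrite big_ord_recr /= -IH mulSnr big_split_ord /=; congr (_ + _).
have xNl1 : x ^+ (N * l) = 1 by rewrite mulnC exprM xl1 expr1n.
by apply: eq_bigr => r _; rewrite exprD xNl1 mul1r.
Qed.

Lemma leq_nchunks (d l : nat) : (0 < l)%N -> (d <= nchunks d l * l)%N.
Proof.
move=> l_gt0; rewrite /nchunks.
have := divn_eq (d + l).-1 l; have := ltn_pmod (d + l).-1 l_gt0.
lia.
Qed.

Lemma big_ord_addn_eq {F : nmodType} (d : nat) (i j : 'I_d) (f : nat -> F) :
  \sum_(n < d | (nat_of_ord i == j + n)%N) f n = if (j <= i)%N then f (i - j)%N else 0.
Proof.
case: leqP => [j_le_i|i_lt_j]; last by rewrite big1 // => n /eqP; lia.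
have ij_lt_d : (i - j < d)%N by apply: leq_ltn_trans (ltn_ord i); apply: leq_subr.
rewrite (bigD1 (Ordinal ij_lt_d)) /= ?subnKC // big1 ?addr0 // => n /andP[/eqP i_eq].
by move/eqP; case; apply: val_inj => /=; lia.
Qed.

Lemma rcE (R : realType) : rc R = real_complex R. Proof. by []. Qed.

Section Quad.
Variables (R : realType) (d : nat).
Local Notation C := R[i].
Local Notation mxC := (map_mx (rc R)).

Definition geom_toeplitz (x : C) : 'M[C]_d :=
  \matrix_(i, j) if (j <= i)%N then x ^+ (i - j) else 0.

Lemma quad_q_series (u v : 'cV[R]_d) (x : C) :
  \sum_(n < d) rc R (quad_q R d u v n) * x ^+ n =
  ((mxC u)^T *m geom_toeplitz x *m mxC v) 0 0.
Proof.
under eq_bigr => n _ do rewrite rcE rmorph_sum mulr_suml.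
rewrite exchange_big mxE /=; apply: eq_bigr => j _.
rewrite !mxE mulr_suml.
under eq_bigr => n _ do rewrite rmorph_sum mulr_suml big_mkcond.
rewrite exchange_big /=; apply: eq_bigr => i _.
rewrite -big_mkcond (big_ord_addn_eq _ i j (fun n => real_complex R (u i 0 * v j 0) * x ^+ n)).
by rewrite !mxE; case: ifP; rewrite ?mulr0 ?mul0r // rmorphM mulrAC.
Qed.

Lemma quad_bilinear (l : nat) (u v : 'cV[R]_d) (m : 'I_l) :
  quad R d l u v m = ((mxC u)^T *m geom_toeplitz (omega R l ^+ m) *m mxC v) 0 0.
Proof.
have l_gt0 : (0 < l)%N by apply: leq_ltn_trans (ltn_ord m).
set x := omega R l ^+ m; rewrite -quad_q_series /quad /dft /quad_w.
have xl1 : x ^+ l = 1 := omega_expr_unity l_gt0 m.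
under eq_bigr => r _ do rewrite rcE rmorph_sum exprM -/x.
rewrite -(sum_chunks_expr x (fun n => real_complex R (quad_qpad R d u v n)) _ _ xl1).
rewrite (big_ord_widen _ (fun n => rc R (quad_q R d u v n) * x ^+ n) (leq_nchunks d l l_gt0)).
rewrite (bigID (fun n : 'I__ => (n < d)%N)) /= [X in _ + X]big1 ?addr0.
  by apply: eq_bigr => n n_lt_d; rewrite /quad_qpad n_lt_d.
by move=> n /negPf n_ge_d; rewrite /quad_qpad n_ge_d rmorph0 mul0r.
Qed.

Lemma mul_shift_geom_toeplitz (x : C) (i j : 'I_d) :
  (mxC (shiftS R d) *m geom_toeplitz x) i j =
  if (0 < i)%N && (j <= i.-1)%N then x ^+ (i.-1 - j) else 0.
Proof.
rewrite mxE; under eq_bigr => k _ do rewrite !mxE rcE rmorph_nat.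
case: i => [[|i] lt_i_d] /=; first by rewrite big1 // => k _; rewrite mul0r.
rewrite (bigD1 (Ordinal (ltnW lt_i_d))) //= eqxx mul1r big1 ?addr0 // => k /eqP k_neq_i.
by rewrite eqSS; case: eqP => [k_eq_i|]; rewrite ?mul0r //; case: k_neq_i; apply: val_inj.
Qed.

Lemma geom_toeplitzP (x : C) :
  (1%:M - x *: mxC (shiftS R d)) *m geom_toeplitz x = 1%:M.
Proof.
apply/matrixP => i j; rewrite mulmxBl mul1mx -scalemxAl.
have := mul_shift_geom_toeplitz x i j; set P := (mxC _ *m _) => P_ij; clearbody P.
rewrite !mxE P_ij -[i == j]/(i == j :> nat).
case: (nat_of_ord i) (nat_of_ord j) => [|i'] [|j'] /=.
- by rewrite mulr0 subr0 expr0.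
- by rewrite mulr0 subr0.
- by rewrite !subn0 -exprS subrr.
rewrite eqSS subSS; case: (ltngtP j' i') => [j_lt_i|i_lt_j|->].
- by rewrite ltnS (ltnW j_lt_i) -subnSK // exprS subrr.
- by rewrite ltnS leqNgt i_lt_j mulr0 subr0.
- by rewrite ltnSn subnn expr0 mulr0 subr0.
Qed.

End Quad.

Lemma mx_exprZn (F : comPzRingType) (n : nat) (c : F) (A : 'M[F]_n) (k : nat) :
  (c *: A) ^+ k = c ^+ k *: A ^+ k.
Proof.
elim: k => [|k IH]; first by rewrite !expr0 scale1r.
by rewrite !exprSr IH -!mulmxE -scalemxAl -scalemxAr scalerA.
Qed.

Lemma mx_geometric_sum (F : pzRingType) (n : nat) (A : 'M[F]_n) (k : nat) :
  (\sum_(i < k) A ^+ i) *m (1%:M - A) = 1%:M - A ^+ k.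
Proof.
elim: k => [|k IH]; first by rewrite big_ord0 mul0mx expr0 subrr.
by rewrite big_ord_recr /= mulmxDl IH mulmxBr mulmx1 mulmxE -exprSr addrA subrK.
Qed.

Lemma geometric_resolvent (F : comUnitRingType) (n l : nat) (A : 'M[F]_n) (x : F) :
  x ^+ l = 1 -> 1%:M - x *: A \in unitmx ->
  (1%:M - A ^+ l) *m invmx (1%:M - x *: A) = \sum_(i < l) x ^+ i *: A ^+ i.
Proof.
move=> xl1 N_unit; apply: (canLR (mulmxK N_unit)).
have -> : A ^+ l = (x *: A) ^+ l by rewrite mx_exprZn xl1 scale1r.
rewrite -mx_geometric_sum.
by congr (_ *m _); apply: eq_bigr => i _; rewrite mx_exprZn.
Qed.

Section ShermanMorrison.
Context {F : fieldType} {n : nat} {M T : 'M[F]_n} {a e : 'cV[F]_n}.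
Hypotheses (MT1 : M *m T = 1%:M) (N_unit : M - a *m e^T \in unitmx).

Let s := (e^T *m T *m a) 0 0.

Let T_mul_N (w : 'cV[F]_n) : T *m ((M - a *m e^T) *m w) = w - (e^T *m w) 0 0 *: (T *m a).
Proof.
rewrite mulmxBl mulmxBr mulmxA (mulmx1C MT1) mul1mx -!mulmxA.
by rewrite {1}[e^T *m w]mx11_scalar mul_mx_scalar scalemxAr.
Qed.

Let N_Ta : (M - a *m e^T) *m (T *m a) = (1 - s) *: a.
Proof.
rewrite mulmxBl mulmxA MT1 mul1mx -mulmxA [e^T *m (T *m a)]mulmxA.
by rewrite {1}[e^T *m T *m a]mx11_scalar mul_mx_scalar scalerBl scale1r.
Qed.

Let denom_neq0 : 1 - s != 0.
Proof.
apply/eqP => s1.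
have Ta0 : T *m a = 0 by rewrite -(mulKmx N_unit (T *m a)) N_Ta s1 scale0r mulmx0.
have a0 : a = 0 by rewrite -(mul1mx a) -MT1 -mulmxA Ta0 mulmx0.
by move/eqP: s1; rewrite /s a0 mulmx0 mxE subr0 oner_eq0.
Qed.

Lemma sherman_morrison (u : 'rV[F]_n) (v : 'cV[F]_n) :
  (u *m invmx (M - a *m e^T) *m v) 0 0 =
  (u *m T *m v) 0 0 + (u *m T *m a) 0 0 * (e^T *m T *m v) 0 0 / (1 - s).
Proof.
rewrite -mulmxA; set y := invmx _ *m v; set t := (e^T *m y) 0 0.
have yE : y = T *m v + t *: (T *m a).
  by rewrite -{1}(mulKVmx N_unit v) -/y T_mul_N subrK.
have tE : t = (e^T *m T *m v) 0 0 + t * s.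
  by rewrite {1}/t {1}yE mulmxDr -scalemxAr mxE [in X in _ + X]mxE !mulmxA.
have {}tE : t = (e^T *m T *m v) 0 0 / (1 - s).
  by apply: (canRL (mulfK denom_neq0)); rewrite mulrBr mulr1 {1}tE addrK.
rewrite yE mulmxDr -scalemxAr mxE [in X in _ + X]mxE !mulmxA tE.
by congr (_ + _); rewrite mulrAC; congr (_ * _); rewrite mulrC.
Qed.

End ShermanMorrison.

Lemma companion_resolvent_sum {F : fieldType} {n l : nat} {S T : 'M[F]_n}
    {a e : 'cV[F]_n} {x : F} (v : 'cV[F]_n) (c : 'rV[F]_n) :
  x != 0 -> x ^+ l = 1 -> (1%:M - x *: S) *m T = 1%:M ->
  1%:M - x *: (S + a *m e^T) \in unitmx ->
  (c *m (1%:M - (S + a *m e^T) ^+ l) *m T *m v) 0 0 +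
    (c *m (1%:M - (S + a *m e^T) ^+ l) *m T *m a) 0 0 * (e^T *m T *m v) 0 0 /
      (x^-1 - (e^T *m T *m a) 0 0) =
  \sum_(i < l) x ^+ i * (c *m (S + a *m e^T) ^+ i *m v) 0 0.
Proof.
move=> x_neq0 xl1 MT1 N_unit; set ct := c *m _.
have N_rank1 : 1%:M - x *: (S + a *m e^T) = (1%:M - x *: S) - (x *: a) *m e^T.
  by rewrite scalerDr opprD addrA scalemxAl.
have := N_unit; rewrite N_rank1 => N_rank1_unit.
have := sherman_morrison MT1 N_rank1_unit ct v; rewrite -N_rank1.
have scale_a (w : 'rV[F]_n) : (w *m (x *: a)) 0 0 = x * (w *m a) 0 0.
  by rewrite -scalemxAr mxE.
rewrite !scale_a => SM.
have den : x^-1 - (e^T *m T *m a) 0 0 = (1 - x * (e^T *m T *m a) 0 0) / x.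
  by rewrite mulrBl mul1r mulrAC divff // mul1r.
transitivity ((ct *m invmx (1%:M - x *: (S + a *m e^T)) *m v) 0 0).
  by rewrite SM den invf_div; congr (_ + _); ring.
rewrite /ct -(mulmxA c) geometric_resolvent // mulmx_sumr mulmx_suml summxE.
by apply: eq_bigr => i _; rewrite -scalemxAr -scalemxAl mxE.
Qed.

Theorem theorem1 (R : realType) (d l : nat) (hd : (1 <= d)%N) (hl : (1 <= l)%N)
  (a B : 'cV[R]_d) (Cm : 'rV[R]_d) :
  (forall m : 'I_l,
     (1%:M - omega R l ^+ m *: map_mx (@rc R) (companion R d a)) \in unitmx) ->
  forall k : 'I_l,
    algorithm1 R d l a B Cm k = rc R ((Cm *m companion R d a ^+ k *m B) 0 0).
Proof.
move=> N_unit k.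
set h := fun j : 'I_l => rc R ((Cm *m companion R d a ^+ j *m B) 0 0).
rewrite -[RHS](idft_dft hl h); apply: eq_idft => m.
set x := omega R l ^+ m.
have x_neq0 : x != 0 by rewrite expf_neq0 // (prim_root_eq0 (omega_prim hl)) -lt0n.
have mx_companion : map_mx (rc R) (companion R d a) =
    map_mx (rc R) (shiftS R d) + map_mx (rc R) a *m (map_mx (rc R) (e_last R d))^T.
  by rewrite rcE map_mxD map_mxM map_trmx.
have mx_Ct : (map_mx (rc R) ((Cm *m (1%:M - companion R d a ^+ l))^T))^T =
    map_mx (rc R) Cm *m (1%:M - map_mx (rc R) (companion R d a) ^+ l).
  by rewrite map_trmx trmxK rcE map_mxM map_mxB map_mx1 rmorphXn.
have := N_unit m; rewrite -/x mx_companion => N_unit_m.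
rewrite (conj_omega hl) exprVn !quad_bilinear -/x mx_Ct mx_companion.
rewrite (companion_resolvent_sum _ _ x_neq0 (omega_expr_unity hl m) (geom_toeplitzP _ _ x) N_unit_m).
rewrite -mx_companion /dft; apply: eq_bigr => i _.
by rewrite mulrC /x -exprM /h rcE -rmorphXn -!map_mxM mxE.
Qed.
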